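(* Let $H = \{h_0 = 0_H, h_1, \dots, h_{t-1}\}$ be a finite abelian group with a fixed enumeration of its elements, and let $\boldsymbol{\lambda} = (\lambda_0,\dots,\lambda_{t-1})$ be a sequence of nonnegative integers. Suppose that for infinitely many primes $p$, every non-zero sum subset of type $\boldsymbol{\lambda}$ of $(\mathbb{Z}_p \times H) \setminus \{0_{\mathbb{Z}_p\times H}\}$ is sequenceable. Then for every torsion-free abelian group $G$, every non-zero sum subset of type $\boldsymbol{\lambda}$ of $(G \times H) \setminus \{0_{G\times H}\}$ is sequenceable.
   Context: For a finite subset $S$ of an abelian group with $|S| = k$, an ordering $(x_1,\dots,x_k)$ of $S$ has partial sums $(y_0,\dots,y_k)$ with $y_0 = 0$, $y_i = x_1+\cdots+x_i$. It is a sequencing if the $y_i$ are pairwise distinct, and a rotational sequencing if they are pairwise distinct except that $y_k = y_0 = 0$; $S$ is sequenceable if it has one or the other. $S$ is non-zero sum if the sum of its elements is nonzero. For an abelian group $G$ and a finite abelian group $H = \{h_0=0_H,\dots,h_{t-1}\}$, the type of a finite subset $S \subseteq G \times H$ is $(\lambda_0,\dots,\lambda_{t-1})$ where $\lambda_i$ is the number of elements of $S$ whose $H$-coordinate equals $h_i$. *)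

From HB Require Import structures.
From mathcomp Require Import all_boot all_order all_algebra.
Set Implicit Arguments. Unset Strict Implicit. Unset Printing Implicit Defensive.
Import GRing.Theory.
Local Open Scope ring_scope.

Definition partial_sums (A : zmodType) (s : seq A) : seq A :=
  [seq \sum_(x <- take i s) x | i <- iota 0 (size s).+1].

Definition is_sequencing (A : zmodType) (s : seq A) : bool :=
  uniq (partial_sums s).

Definition is_rotational_sequencing (A : zmodType) (s : seq A) : bool :=
  uniq (take (size s) (partial_sums s)) && (\sum_(x <- s) x == 0).

(* A finite subset S (given as a duplicate-free list) is sequenceable if
   some ordering of S is a sequencing or a rotational sequencing. *)
Definition sequenceable (A : zmodType) (S : seq A) : Prop :=
  exists s : seq A, perm_eq s S /\ (is_sequencing s || is_rotational_sequencing s).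

Definition nonzero_sum (A : zmodType) (S : seq A) : bool := \sum_(x <- S) x != 0.

Definition has_type (G : zmodType) (H : finZmodType) (t : nat)
  (h : 'I_t -> H) (lam : 'I_t -> nat) (S : seq (G * H)) : Prop :=
  forall i : 'I_t, count (fun x => x.2 == h i) S = lam i.

Definition torsion_free (G : zmodType) : Prop :=
  forall (x : G) (n : nat), (0 < n)%N -> x *+ n = 0 -> x = 0.

(* Write the first coordinates of S as g_0, ..., g_(k-1).  Since G is
   torsion-free, there are integers a_0, ..., a_(k-1) such that for every
   c in {-1,0,1}^k, sum c_i g_i = 0 iff sum c_i a_i = 0: by induction on k,
   either some nonzero multiple of g_0 is an integer combination of the other
   g_i and can be substituted away, or g_0 is independent of them and gets a
   coefficient exceeding every bounded combination of the other a_i.  For a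
   prime p > sum |a_i| the set S' = {(a_i mod p, h-coordinate of S_i)} of
   Z_p x H then has the same type and exactly the same coincidences among
   subset sums as S.  Being duplicate-free, avoiding 0, having nonzero sum and
   being (rotationally) sequenceable only depend on these coincidences, so the
   hypothesis for S' gives the conclusion for S. *)

From HB Require Import structures.
From mathcomp Require Import all_boot all_order all_algebra.
From mathcomp Require Import zify.
From Stdlib Require Import Classical.
Set Implicit Arguments. Unset Strict Implicit. Unset Printing Implicit Defensive.
Import Order.TTheory GRing.Theory Num.Theory.
Local Open Scope ring_scope.

Definition zcomb (G : zmodType) (g : seq G) (c : nat -> int) : G :=
  \sum_(i < size g) g`_i *~ c i.

Section IntegerCombinations.
Variable G : zmodType.
Implicit Types (g : seq G) (c d : nat -> int).

Lemma zcomb_cons (x : G) g c :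
  zcomb (x :: g) c = x *~ c 0%N + zcomb g (fun i => c i.+1).
Proof. by rewrite /zcomb big_ord_recl. Qed.

Lemma zcombD g c d : zcomb g (fun i => c i + d i) = zcomb g c + zcomb g d.
Proof. by rewrite /zcomb -big_split; apply: eq_bigr => i _; rewrite mulrzDr. Qed.

Lemma zcombN g c : zcomb g (fun i => - c i) = - zcomb g c.
Proof. by rewrite /zcomb -sumrN; apply: eq_bigr => i _; rewrite mulrNz. Qed.

Lemma zcombMz g c (m : int) : zcomb g (fun i => c i * m) = zcomb g c *~ m.
Proof. by rewrite /zcomb mulrz_suml; apply: eq_bigr => i _; rewrite mulrzA. Qed.

Lemma zcomb_mulrz g c (m : int) : zcomb [seq y *~ m | y <- g] c = zcomb g c *~ m.
Proof.
rewrite /zcomb size_map mulrz_suml; apply: eq_bigr => i _.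
by rewrite (nth_map 0) // mulrzAC.
Qed.

Lemma zcomb_map (V : zmodType) (f : {additive G -> V}) g c :
  zcomb (map f g) c = f (zcomb g c).
Proof.
rewrite /zcomb size_map raddf_sum; apply: eq_bigr => i _.
by rewrite (nth_map 0) // raddfMz.
Qed.

Lemma sum_nth_zcomb g (L : seq nat) :
  uniq L -> {subset L <= iota 0 (size g)} ->
  \sum_(i <- L) g`_i = zcomb g (fun i => (i \in L)%:Z).
Proof.
move=> uL sL; have pL : perm_eq L [seq i <- iota 0 (size g) | i \in L].
  apply: uniq_perm; rewrite ?filter_uniq ?iota_uniq // => i.
  by rewrite mem_filter; apply/idP/andP => [iL | []//]; split; last exact: sL.
rewrite (perm_big _ pL) big_filter big_mkcond /zcomb.
have -> : iota 0 (size g) = index_iota 0 (size g) by rewrite /index_iota subn0.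
rewrite big_mkord.
by apply: eq_bigr => i _; case: (val i \in L); rewrite ?mulr1z ?mulr0z.
Qed.

End IntegerCombinations.

Lemma zcomb_int_bound (a : seq int) (c : nat -> int) (B : int) :
  (forall i, (i < size a)%N -> `|c i| <= B) ->
  `|zcomb a c| <= B * \sum_(i < size a) `|a`_i|.
Proof.
move=> bc; rewrite /zcomb mulr_sumr; apply: le_trans (ler_norm_sum _ _ _) _.
apply: ler_sum => i _; rewrite mulrzz normrM mulrC.
by apply: ler_wpM2r; [exact: normr_ge0 | exact: bc].
Qed.

Lemma torsion_free_mulrz_eq0 (G : zmodType) (x : G) (m : int) :
  torsion_free G -> m != 0 -> (x *~ m == 0) = (x == 0).
Proof.
move=> tfG m0; apply/eqP/eqP => [|->]; last exact: mul0rz.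
case: m m0 => n n0; first by rewrite -pmulrn; apply: tfG; lia.
by rewrite NegzE mulrNz => /eqP; rewrite oppr_eq0 => /eqP/tfG->.
Qed.

Lemma Zp_intr_eq0 (p : nat) (z : int) :
  (1 < p)%N -> (`|z|%N < p)%N -> ((z%:~R : 'Z_p) == 0) = (z == 0).
Proof.
move=> p1; have natr_eq0 n : (n < p)%N -> ((n%:R : 'Z_p) == 0) = (n == 0)%N.
  by move=> np; rewrite -val_eqE /= val_Zp_nat // modn_small.
by case: z => n /= np; rewrite ?NegzE ?mulrNz ?oppr_eq0 natr_eq0.
Qed.

Definition same_bounded_relations (G G' : zmodType) (g : seq G) (g' : seq G')
    (B : int) : Prop :=
  size g' = size g /\
  forall c : nat -> int, (forall i, (i < size g)%N -> `|c i| <= B) ->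
    (zcomb g c == 0) = (zcomb g' c == 0).

Lemma same_bounded_relations_trans (G1 G2 G3 : zmodType)
    (g1 : seq G1) (g2 : seq G2) (g3 : seq G3) (B : int) :
  same_bounded_relations g1 g2 B -> same_bounded_relations g2 g3 B ->
  same_bounded_relations g1 g3 B.
Proof.
move=> [s12 r12] [s23 r23]; split => [|c bc]; first by rewrite s23.
by rewrite r12 // r23 // s12.
Qed.

Section BoundedRelationsCons.
Variables (G : zmodType) (x : G) (g : seq G) (a' : seq int) (B : int).

Lemma same_bounded_relations_cons_dep (m : int) (d : nat -> int) :
  torsion_free G -> m != 0 -> x *~ m = zcomb g d ->
  same_bounded_relations g a' (B * (\sum_(i < size g) `|d i| + `|m|)) ->
  same_bounded_relations (x :: g) (zcomb a' d :: [seq y *~ m | y <- a']) B.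
Proof.
move=> tfG m0 xmE [sa' rel']; split => [|c bc]; first by rewrite /= size_map sa'.
pose c' i := d i * c 0%N + c i.+1 * m.
have zcombG : zcomb (x :: g) c *~ m = zcomb g c'.
  by rewrite zcombD !zcombMz zcomb_cons mulrzDl mulrzAC xmE.
have zcombZ : zcomb (zcomb a' d :: [seq y *~ m | y <- a']) c = zcomb a' c'.
  by rewrite zcombD !zcombMz zcomb_cons zcomb_mulrz.
rewrite -(torsion_free_mulrz_eq0 _ tfG m0) zcombG zcombZ rel' // => i ig.
have B0 : 0 <= B by apply: le_trans (bc 0%N isT); exact: normr_ge0.
have di_le : `|d i| <= \sum_(j < size g) `|d j|.
  by rewrite (bigD1 (Ordinal ig)) //= lerDl sumr_ge0.
rewrite mulrDr; apply: le_trans (ler_normD _ _) _; rewrite !normrM.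
apply: lerD; last by apply: ler_wpM2r; [exact: normr_ge0 | exact: bc].
by rewrite mulrC; apply: ler_pM => //; exact: bc.
Qed.

Lemma same_bounded_relations_cons_indep :
  (forall (m : int) (d : nat -> int), x *~ m = zcomb g d -> m = 0) ->
  same_bounded_relations g a' B ->
  same_bounded_relations (x :: g)
    ((B * \sum_(i < size a') `|a'`_i| + 1) :: a') B.
Proof.
move=> indep [sa' rel']; split => [|c bc]; first by rewrite /= sa'.
set K := B * _; have bc' i : (i < size g)%N -> `|c i.+1| <= B := bc i.+1.
rewrite !zcomb_cons; have [c0|c0] := eqVneq (c 0%N) 0.
  by rewrite c0 !mulr0z !add0r rel'.
have -> : (x *~ c 0%N + zcomb g (fun i => c i.+1) == 0) = false.
  apply/negbTE/negP; rewrite addr_eq0 -zcombN => /eqP/indep c00.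
  by rewrite c00 eqxx in c0.
apply/esym/negbTE/negP; rewrite addr_eq0 mulrzz => /eqP Kc0E.
have : `|(K + 1) * c 0%N| <= K.
  by rewrite Kc0E normrN; apply: zcomb_int_bound; rewrite sa'.
have K0 : 0 <= K.
  by apply: mulr_ge0; [exact: le_trans (bc 0%N isT) | exact: sumr_ge0].
rewrite normrM ger0_norm ?addr_ge0 //.
have : 0 < `|c 0%N| by rewrite normr_gt0.
move: K0; set y := `|c 0%N|; clear; nia.
Qed.

End BoundedRelationsCons.

Lemma int_bounded_relations (G : zmodType) (g : seq G) (B : int) :
  torsion_free G -> exists a : seq int, same_bounded_relations g a B.
Proof.
move=> tfG; elim: g B => [|x g IH] B.
  by exists [::]; split => // c _; rewrite /zcomb !big_ord0 !eqxx.
have [[m [m0 [d xmE]]] | indep] :=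
  classic (exists m : int, m != 0 /\ exists d, x *~ m = zcomb g d).
  have [a' rel'] := IH (B * (\sum_(i < size g) `|d i| + `|m|)).
  by eexists; apply: same_bounded_relations_cons_dep rel'.
have [a' rel'] := IH B; eexists; apply: same_bounded_relations_cons_indep rel'.
move=> m d xmE; apply/eqP/negPn/negP => m0.
by apply: indep; exists m; split => //; exists d.
Qed.

Lemma Zp_bounded_relations (p : nat) (a : seq int) (B : int) :
  (1 < p)%N -> B * \sum_(i < size a) `|a`_i| < p%:Z ->
  same_bounded_relations a [seq z%:~R : 'Z_p | z <- a] B.
Proof.
move=> p1 ltBp; split => [|c bc]; first by rewrite size_map.
rewrite (zcomb_map intr) Zp_intr_eq0 //.
have := zcomb_int_bound bc; move: ltBp; lia.
Qed.

Definition subsum_equiv (A A' : zmodType) (F : nat -> A) (F' : nat -> A')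
    (k : nat) : Prop :=
  forall L1 L2 : seq nat, uniq L1 -> uniq L2 ->
    {subset L1 <= iota 0 k} -> {subset L2 <= iota 0 k} ->
    (\sum_(i <- L1) F i == \sum_(i <- L2) F i) =
    (\sum_(i <- L1) F' i == \sum_(i <- L2) F' i).

Lemma subsum_equiv_of_relations (G G' : zmodType) (g : seq G) (g' : seq G') :
  same_bounded_relations g g' 1 -> subsum_equiv (nth 0 g) (nth 0 g') (size g).
Proof.
move=> [sg' rel] L1 L2 u1 u2 s1 s2.
have s1' : {subset L1 <= iota 0 (size g')} by rewrite sg'.
have s2' : {subset L2 <= iota 0 (size g')} by rewrite sg'.
rewrite -subr_eq0 -[in RHS]subr_eq0 !sum_nth_zcomb // -!zcombN -!zcombD rel //.
by move=> i _; case: (i \in L1); case: (i \in L2).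
Qed.

Lemma sum_pair (A B : zmodType) (I : Type) (r : seq I) (F : I -> A) (E : I -> B) :
  \sum_(i <- r) (F i, E i) = (\sum_(i <- r) F i, \sum_(i <- r) E i).
Proof. by elim: r => [|i r IH]; rewrite ?big_nil ?big_cons ?IH. Qed.

Lemma eq_uniq_map_in (T A B : eqType) (f : T -> A) (f' : T -> B) (s : seq T) :
  {in s &, forall x y, (f x == f y) = (f' x == f' y)} ->
  uniq (map f s) = uniq (map f' s).
Proof.
elim: s => //= x s IH eqf; rewrite IH => [|y z ys zs]; last first.
  by rewrite eqf ?inE ?ys ?zs ?orbT.
congr (~~ _ && _); apply/mapP/mapP => -[y ys fxy]; exists y => //; apply/eqP.
  by rewrite -eqf ?inE ?ys ?eqxx ?orbT ?fxy.
by rewrite eqf ?inE ?ys ?eqxx ?orbT ?fxy.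
Qed.

Lemma partial_sums_map (A : zmodType) (T : Type) (F : T -> A) (s : seq T) :
  partial_sums (map F s) =
  [seq \sum_(i <- take j s) F i | j <- iota 0 (size s).+1].
Proof.
by rewrite /partial_sums size_map; apply: eq_map => j; rewrite -map_take big_map.
Qed.

Section SubsumEquivalence.
Variables (A A' : zmodType) (F : nat -> A) (F' : nat -> A') (k : nat).
Hypothesis eqF : subsum_equiv F F' k.

Lemma subsum_equiv_pair (B : zmodType) (E : nat -> B) :
  subsum_equiv (fun i => (F i, E i)) (fun i => (F' i, E i)) k.
Proof.
by move=> L1 L2 u1 u2 s1 s2; rewrite !sum_pair !xpair_eqE eqF.
Qed.

Lemma subsum_equiv_uniq : uniq (mkseq F k) = uniq (mkseq F' k).
Proof.
apply: eq_uniq_map_in => i j ik jk.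
by have := eqF (L1 := [:: i]) (L2 := [:: j]); rewrite !big_seq1; apply => // x;
  rewrite inE => /eqP->.
Qed.

Lemma subsum_equiv_mem0 : (0 \in mkseq F k) = (0 \in mkseq F' k).
Proof.
rewrite -!has_pred1 !has_map; apply: eq_in_has => i ik /=.
have := eqF (L1 := [:: i]) (L2 := [::]); rewrite !big_seq1 !big_nil; apply => // x.
by rewrite inE => /eqP->.
Qed.

Lemma subsum_equiv_nonzero_sum : nonzero_sum (mkseq F k) = nonzero_sum (mkseq F' k).
Proof.
rewrite /nonzero_sum !big_map; congr negb.
by have := eqF (L1 := iota 0 k) (L2 := [::]); rewrite !big_nil; apply; rewrite ?iota_uniq.
Qed.

Lemma subsum_equiv_sequenceable : sequenceable (mkseq F' k) -> sequenceable (mkseq F k).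
Proof.
case=> s' [/(perm_iotaP 0)[Is pIs ->] seq_s'].
have sIs : {subset Is <= iota 0 k} by move=> i; rewrite (perm_mem pIs) size_mkseq.
have uIs : uniq Is by rewrite (perm_uniq pIs) iota_uniq.
have eIs : map (nth 0 (mkseq F' k)) Is = map F' Is.
  by apply/eq_in_map => i /sIs; rewrite mem_iota => /andP[_ ik]; rewrite nth_mkseq.
exists (map F Is); split; first by apply: perm_map; rewrite size_mkseq in pIs.
have same_eqs l : uniq (map (fun j => \sum_(i <- take j Is) F i) l) =
                  uniq (map (fun j => \sum_(i <- take j Is) F' i) l).
  apply: eq_uniq_map_in => i j _ _; apply: eqF; rewrite ?take_uniq //;
    by move=> x /mem_take /sIs.
move: seq_s'; rewrite eIs /is_sequencing /is_rotational_sequencing !partial_sums_map.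
rewrite !size_map -!map_take !same_eqs !big_map.
by have := eqF (L1 := Is) (L2 := [::]); rewrite !big_nil => ->.
Qed.

End SubsumEquivalence.

Theorem theorem4p4 (H : finZmodType) (t : nat) (h : 'I_t -> H)
  (h_bij : bijective h) (h_0 : forall i : 'I_t, nat_of_ord i = 0%N -> h i = 0)
  (lam : 'I_t -> nat) :
  (forall N : nat, exists p : nat, (N < p)%N /\ prime p /\
     (forall S : seq ('Z_p * H)%type, uniq S -> 0 \notin S ->
        has_type h lam S -> nonzero_sum S -> sequenceable S)) ->
  forall G : zmodType, torsion_free G ->
  forall S : seq (G * H)%type, uniq S -> 0 \notin S ->
    has_type h lam S -> nonzero_sum S -> sequenceable S.
Proof.
move=> hyp G tfG S uS S0 typeS nzS.
pose g := [seq x.1 | x <- S]; pose E i := (S`_i).2.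
have [a rel_ga] := int_bounded_relations g 1 tfG.
pose P := \sum_(i < size a) `|a`_i|.
have [p [ltPp [p_prime hyp_p]]] := hyp `|P|%N.
pose g' := [seq z%:~R : 'Z_p | z <- a].
have rel_gg' : same_bounded_relations g g' 1.
  apply: same_bounded_relations_trans rel_ga (Zp_bounded_relations _ _).
    exact: prime_gt1.
  by rewrite mul1r -/P; move: ltPp; lia.
have eqv := subsum_equiv_pair (subsum_equiv_of_relations rel_gg') E.
have eS : S = mkseq (fun i => (g`_i, E i)) (size g).
  rewrite -[LHS](mkseq_nth 0) size_map; apply: eq_mkseq => i.
  have [iS | Si] := ltnP i (size S); first by rewrite (nth_map 0) // -surjective_pairing.
  by rewrite /E !nth_default ?size_map.
rewrite eS in uS S0 typeS nzS *; apply: (subsum_equiv_sequenceable eqv); apply: hyp_p.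
- by rewrite -(subsum_equiv_uniq eqv).
- by rewrite -(subsum_equiv_mem0 eqv).
- by move=> i; rewrite -typeS /mkseq !count_map.
- by rewrite -(subsum_equiv_nonzero_sum eqv).
Qed.
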